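(* Let $n,m\in\mathbb{N}$, let $\mathcal{Y}\subset\mathbb{R}^m$ be nonempty, convex and compact, and let $f:2^{[n]}\times\mathbb{R}^m\to\mathbb{R}$ be such that $f(\cdot,y)$ is submodular for every $y$ and $f(S,\cdot)$ is concave and continuous for every $S\subset[n]$. Let $f^L$ be the Lovász extension of $f$ with respect to the first variable and let $\zeta(x)=\max_{y\in\mathcal{Y}}f^L(x,y)$ for $x\in[0,1]^n$. Suppose at least one of the following holds: (i) $\zeta$ is the Lovász extension of some submodular function $g:2^{[n]}\to\mathbb{R}$; (ii) the set of minimisers of $\zeta$ over $[0,1]^n$ contains a point of $\{0,1\}^n$; (iii) there exists $\bar x\in\{0,1\}^n$ such that $\bar x$ minimises $f^L(\cdot,y)$ over $[0,1]^n$ for every $y\in\mathcal{Y}$. Then $\min_{x\in[0,1]^n}\max_{y\in\mathcal{Y}}f^L(x,y)=\min_{x\in\{0,1\}^n}\max_{y\in\mathcal{Y}}f^L(x,y)$, and $f$ admits a saddle point on $2^{[n]}\times\mathcal{Y}$.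
   Context: $[n]=\{1,\dots,n\}$; subsets $S\subset[n]$ are identified with their indicator vectors in $\{0,1\}^n$. A set function $g:2^{[n]}\to\mathbb{R}$ is submodular if $g(S)+g(T)\ge g(S\cap T)+g(S\cup T)$ for all $S,T\subset[n]$. Lovász extension: for $g:2^{[n]}\to\mathbb{R}$ and $x\in[0,1]^n$, choose a permutation $(j_1,\dots,j_n)$ of $[n]$ with $x_{j_1}\ge\dots\ge x_{j_n}$ and set $g^L(x)=(1-x_{j_1})\,g(\emptyset)+\sum_{k=1}^{n-1}(x_{j_k}-x_{j_{k+1}})\,g(\{j_1,\dots,j_k\})+x_{j_n}\,g([n])$. For $f:2^{[n]}\times\mathbb{R}^m\to\mathbb{R}$, the Lovász extension with respect to the first variable is $f^L(x,y):=(f(\cdot,y))^L(x)$. A saddle point of $f$ on $2^{[n]}\times\mathcal{Y}$ is a pair $(S^*,y^* )$ with $f(S^*,y)\le f(S^*,y^* )\le f(S,y^* )$ for all $S\subset[n]$, $y\in\mathcal{Y}$. *)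

From HB Require Import structures.
From mathcomp Require Import all_boot all_order all_algebra.
From mathcomp Require Import all_classical all_reals all_analysis.
Set Implicit Arguments. Unset Strict Implicit. Unset Printing Implicit Defensive.
Import Order.TTheory GRing.Theory Num.Theory.
Import numFieldNormedType.Exports.
Local Open Scope classical_set_scope.
Local Open Scope ring_scope.

Section Defs.
Variable R : realType.

Definition submodular (n : nat) (g : {set 'I_n} -> R) : Prop :=
  forall S T : {set 'I_n}, g (S :&: T) + g (S :|: T) <= g S + g T.

Definition indic (n : nat) (S : {set 'I_n}) : 'I_n -> R :=
  fun i => if i \in S then 1 else 0.

Definition unit_cube (n : nat) : set ('I_n -> R) :=
  [set x | forall i, 0 <= x i <= 1].

Definition binary_pts (n : nat) : set ('I_n -> R) :=
  [set x | exists S : {set 'I_n}, x = indic S].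

(* enumeration j_1,...,j_n of [n] with x_{j_1} >= ... >= x_{j_n} *)
Definition lov_order (n : nat) (x : 'I_n -> R) : seq 'I_n :=
  sort (fun i j : 'I_n => x j <= x i) (enum 'I_n).

(* Lovász extension; with t_0 = 1, t_k = x_{j_k} (1<=k<=n), t_{n+1} = 0,
   g^L(x) = sum_{k=0}^{n} (t_k - t_{k+1}) g({j_1,...,j_k}),
   which is exactly the paper's formula for n >= 1. *)
Definition lovasz (n : nat) (g : {set 'I_n} -> R) (x : 'I_n -> R) : R :=
  let s := lov_order x in
  let t := fun k => nth 0 (1 :: map x s) k in
  \sum_(k < n.+1) (t k - t k.+1) * g (finset (fun i => i \in take k s)).

Definition lovasz2 (n m : nat) (f : {set 'I_n} -> 'rV[R]_m -> R)
  (x : 'I_n -> R) (y : 'rV[R]_m) : R := lovasz (fun S => f S y) x.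

Definition convex_subset (m : nat) (Y : set 'rV[R]_m) : Prop :=
  forall a b, Y a -> Y b -> forall t : R, 0 <= t <= 1 ->
    Y (t *: a + (1 - t) *: b).

Definition concave_fun (m : nat) (h : 'rV[R]_m -> R) : Prop :=
  forall a b, forall t : R, 0 <= t <= 1 ->
    t * h a + (1 - t) * h b <= h (t *: a + (1 - t) *: b).

(* zeta(x) = max_{y in Y} f^L(x,y), written as a supremum (it is attained) *)
Definition zeta (n m : nat) (f : {set 'I_n} -> 'rV[R]_m -> R)
  (Y : set 'rV[R]_m) (x : 'I_n -> R) : R :=
  sup [set lovasz2 f x y | y in Y].

Definition saddle_point (n m : nat) (f : {set 'I_n} -> 'rV[R]_m -> R)
  (Y : set 'rV[R]_m) (S : {set 'I_n}) (y0 : 'rV[R]_m) : Prop :=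
  Y y0 /\ (forall y, Y y -> f S y <= f S y0) /\
  (forall T : {set 'I_n}, f S y0 <= f T y0).

End Defs.

From Pilot Require Import Defs.
From HB Require Import structures.
From mathcomp Require Import all_boot all_order all_algebra.
From mathcomp Require Import all_classical all_reals all_analysis.
From mathcomp Require Import ring lra.
Set Implicit Arguments. Unset Strict Implicit. Unset Printing Implicit Defensive.
Import Order.TTheory GRing.Theory Num.Theory.
Import numFieldNormedType.Exports.
Local Open Scope ring_scope.

(* A binary minimiser [S] of [zeta] exists under each of (i)-(iii): in case (i)
   take a minimiser of [g], whose Lovász extension is bounded below by it on
   the cube.  It remains to find [y0] in [Y] with [f T y0 >= c := zeta 1_S] for
   every set [T]; then [(S, y0)] is a saddle point.  Take for [y0] a minimiser
   over the compact set [Y] of the penalty [sum_T max(0, c - f T y)^2].  If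
   some shortfall [P T = max(0, c - f T y0)] were positive, the first-order
   optimality of [y0] (by concavity of [f T]) and Edmonds' greedy inequality
   (by submodularity) would show that [zeta] is below [c] at the point
   [sum_T (P T / sum P) 1_T] of the cube, contradicting minimality of [1_S]. *)

Lemma setIU1r (T : finType) (A B : {set T}) (a : T) :
  A :&: (a |: B) = if a \in A then a |: (A :&: B) else A :&: B.
Proof.
apply/setP => i; case: ifP => aA; rewrite !inE;
by case: (eqVneq i a) => [->|]; rewrite ?aA ?andbF.
Qed.

Section LovaszExtension.
Variables (R : realType) (n : nat).
Import mathcomp.boot.fintype mathcomp.boot.finset.
Implicit Types (g : {set 'I_n} -> R) (x y : 'I_n -> R) (S T : {set 'I_n}).

Lemma size_lov_order x : size (lov_order x) = n.
Proof. by rewrite size_sort size_enum_ord. Qed.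

Lemma lov_order_uniq x : uniq (lov_order x).
Proof. by rewrite sort_uniq enum_uniq. Qed.

Lemma mem_lov_order x i : i \in lov_order x.
Proof. by rewrite mem_sort mem_enum. Qed.

Lemma lov_order_nonincr x (d : 'I_n) (i j : nat) : (i <= j < n)%N ->
  x (nth d (lov_order x) j) <= x (nth d (lov_order x) i).
Proof.
move=> /andP[ij jn].
have tr : transitive (fun i j : 'I_n => x j <= x i).
  by move=> a b c /= ba cb; apply: le_trans cb ba.
apply: (sorted_leq_nth tr) => //; rewrite ?inE ?size_lov_order //.
- exact/sort_sorted/(fun a b => le_total (x b) (x a)).
- exact: leq_ltn_trans jn.
Qed.

Definition lov_prefix x k : {set 'I_n} := [set i | i \in take k (lov_order x)].

Lemma lov_prefix0 x : lov_prefix x 0 = set0.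
Proof. by apply/setP => i; rewrite !inE take0. Qed.

Lemma lov_prefixT x : lov_prefix x n = setT.
Proof.
apply/setP => i.
by rewrite !inE -[X in take X _](size_lov_order x) take_size mem_lov_order.
Qed.

Lemma lov_prefixS x k (d : 'I_n) : (k < n)%N ->
  lov_prefix x k.+1 = nth d (lov_order x) k |: lov_prefix x k.
Proof.
move=> kn; apply/setP => i.
by rewrite !inE (take_nth d) ?size_lov_order // mem_rcons in_cons.
Qed.

Lemma nth_lov_order_notin x k (d : 'I_n) : (k < n)%N ->
  nth d (lov_order x) k \notin lov_prefix x k.
Proof.
move=> kn; have := take_uniq k.+1 (lov_order_uniq x).
by rewrite (take_nth d) ?size_lov_order // rcons_uniq inE => /andP[].
Qed.

Lemma lov_prefix_ge x k (d : 'I_n) i : (k < n)%N -> i \in lov_prefix x k ->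
  x (nth d (lov_order x) k) <= x i.
Proof.
move=> kn; rewrite inE => ik.
have jk : (index i (take k (lov_order x)) < k)%N.
  by move: ik; rewrite -index_mem size_take_min => /leq_trans; apply; exact: geq_minl.
have -> : i = nth d (lov_order x) (index i (take k (lov_order x))).
  by rewrite -(nth_take d jk) nth_index.
by apply: lov_order_nonincr; rewrite (ltnW jk).
Qed.

(* The partial sums of the pairing of [y] with the greedy base vector of [g]
   for the order of [x]; [greedy_sum g x x n] is the Lovász extension. *)
Definition greedy_sum g x y j : R := g set0 + \sum_(0 <= k < j)
  nth 0 (map y (lov_order x)) k * (g (lov_prefix x k.+1) - g (lov_prefix x k)).

Lemma greedy_sum0 g x y : greedy_sum g x y 0 = g set0.
Proof. by rewrite /greedy_sum big_geq // addr0. Qed.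

Lemma greedy_sumS g x y j (d : 'I_n) : (j < n)%N ->
  let a := nth d (lov_order x) j in
  greedy_sum g x y j.+1 =
  greedy_sum g x y j + y a * (g (a |: lov_prefix x j) - g (lov_prefix x j)).
Proof.
move=> jn a; rewrite /greedy_sum big_nat_recr //= addrA (lov_prefixS x d jn).
by rewrite (nth_map d) ?size_lov_order.
Qed.

Lemma lovasz_greedy_sum g x : lovasz g x = greedy_sum g x x n.
Proof.
rewrite /lovasz /greedy_sum big_mkord.
set t := fun k => nth 0 (1 :: map x (lov_order x)) k.
rewrite (eq_bigr (fun k : 'I_n.+1 => t k * g (lov_prefix x k) -
  t k.+1 * g (lov_prefix x k))) => [|k _]; last by rewrite mulrBl.
rewrite sumrB big_ord_recl big_ord_recr /= lov_prefix0 mul1r.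
have -> : t n.+1 = 0 by rewrite /t /= nth_default // size_map size_lov_order.
rewrite mul0r addr0 -addrA; congr (_ + _).
by rewrite -sumrB; apply: eq_bigr => k _; rewrite mulrBr.
Qed.

(* Edmonds' greedy inequality: the greedy base vector lies in the base
   polytope of a submodular function. *)
Lemma greedy_sum_indic_le g x T j : submodular g -> (j <= n)%N ->
  greedy_sum g x (Defs.indic R T) j <= g (T :&: lov_prefix x j).
Proof.
move=> subg; elim: j => [_|j IH jn]; first by rewrite greedy_sum0 lov_prefix0 setI0.
rewrite (greedy_sumS _ _ _ (Ordinal jn) jn).
set a := nth _ _ j; have := nth_lov_order_notin x (Ordinal jn) jn.
rewrite (lov_prefixS x (Ordinal jn) jn) -/a setIU1r /Defs.indic => aA.
have := IH (ltnW jn).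
case: ifP => aT; last by rewrite mul0r addr0.
set A := lov_prefix x j in aA *.
have := subg (a |: (T :&: A)) A.
have -> : (a |: (T :&: A)) :&: A = T :&: A.
  apply/setP => i; move: aA; rewrite !inE => /negbTE aA.
  by case: eqVneq => [->|_] /=; rewrite ?aA ?andbF // -andbA andbb.
have -> : (a |: (T :&: A)) :|: A = a |: A.
  by apply/setP => i; rewrite !inE -orbA; case: (i \in T) => /=; rewrite ?orbb.
rewrite mul1r; lra.
Qed.

Lemma greedy_sum_indic_self g S j : (j <= n)%N ->
  let x := Defs.indic R S in greedy_sum g x x j = g (S :&: lov_prefix x j).
Proof.
move=> + x; elim: j => [_|j IH jn]; first by rewrite greedy_sum0 lov_prefix0 setI0.
rewrite (greedy_sumS _ _ _ (Ordinal jn) jn) (lov_prefixS x (Ordinal jn) jn) //.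
rewrite setIU1r IH 1?ltnW //; set a := nth _ _ j.
have -> : x a = if a \in S then 1 else 0 by [].
case: ifP => aS; last by rewrite mul0r addr0.
have /setIidPr -> : lov_prefix x j \subset S.
  apply/subsetP => i /(lov_prefix_ge (Ordinal jn) jn).
  by rewrite -/a /x /Defs.indic aS; case: (i \in S); rewrite // ler10.
by rewrite mul1r addrC subrK.
Qed.

Lemma lovasz_indic g S : lovasz g (Defs.indic R S) = g S.
Proof. by rewrite lovasz_greedy_sum greedy_sum_indic_self // lov_prefixT setIT. Qed.

Lemma greedy_sum_mix g x (q : {set 'I_n} -> R) j : \sum_T q T = 1 ->
  greedy_sum g x (fun i => \sum_T q T * Defs.indic R T i) j =
  \sum_T q T * greedy_sum g x (Defs.indic R T) j.
Proof.
move=> q1; rewrite /greedy_sum.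
under [RHS]eq_bigr do rewrite mulrDr mulr_sumr.
rewrite big_split /= -mulr_suml q1 mul1r exchange_big /=; congr (_ + _).
apply: eq_bigr => k _.
case: (ltnP k n) => kn; last first.
  rewrite !nth_default ?size_map ?size_lov_order // mul0r.
  by rewrite big1 // => T _; rewrite nth_default ?size_map ?size_lov_order // mul0r mulr0.
rewrite (nth_map (Ordinal kn)) ?size_lov_order // mulr_suml; apply: eq_bigr => T _.
by rewrite (nth_map (Ordinal kn)) ?size_lov_order // mulrA.
Qed.

Lemma lovasz_mix_le g (q : {set 'I_n} -> R) : submodular g ->
  (forall T, 0 <= q T) -> \sum_T q T = 1 ->
  lovasz g (fun i => \sum_T q T * Defs.indic R T i) <= \sum_T q T * g T.
Proof.
move=> subg q0 q1; set x := fun i => _.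
rewrite lovasz_greedy_sum greedy_sum_mix //; apply: ler_sum => T _.
apply: ler_wpM2l => //; rewrite -[in leRHS](setIT T) -(lov_prefixT x).
exact: greedy_sum_indic_le.
Qed.

Lemma nth_lov_order_cube x k : unit_cube x ->
  0 <= nth 0 (map x (lov_order x)) k <= 1.
Proof.
move=> xc; case: (ltnP k n) => kn.
  by rewrite (nth_map (Ordinal kn)) ?size_lov_order //; apply: xc.
by rewrite nth_default ?size_map ?size_lov_order // lexx ler01.
Qed.

Lemma lov_level_nonincr x k : unit_cube x ->
  nth 0 (1 :: map x (lov_order x)) k.+1 <= nth 0 (1 :: map x (lov_order x)) k.
Proof.
move=> xc; case: k => [|k] /=; first by case/andP: (nth_lov_order_cube 0 xc).
case: (ltnP k.+1 n) => kn.
  rewrite !(nth_map (Ordinal kn)) ?size_lov_order ?(ltnW kn) //.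
  by apply: lov_order_nonincr; rewrite leqnSn.
rewrite [X in X <= _]nth_default ?size_map ?size_lov_order //.
by case/andP: (nth_lov_order_cube k xc).
Qed.

Lemma lovasz_ge g x b : unit_cube x -> (forall T, b <= g T) -> b <= lovasz g x.
Proof.
move=> xc gb; rewrite /lovasz; set t := fun k => nth 0 (1 :: map x (lov_order x)) k.
have t_telescope : \sum_(k < n.+1) (t k - t k.+1) = 1.
  rewrite -(big_mkord xpredT (fun k => t k - t k.+1)) -[LHS]opprK -sumrN.
  under eq_bigr do rewrite opprB.
  by rewrite telescope_sumr // /t /= nth_default ?size_map ?size_lov_order // sub0r opprK.
rewrite -[leLHS]mul1r -{1}t_telescope mulr_suml; apply: ler_sum => k _.
by apply: ler_wpM2l; [rewrite subr_ge0; apply: lov_level_nonincr | apply: gb].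
Qed.

Lemma indic_cube S : unit_cube (Defs.indic R S).
Proof. by move=> i; rewrite /Defs.indic; case: (i \in S); rewrite ?lexx ?ler01. Qed.

Lemma mix_indic_cube (q : {set 'I_n} -> R) : (forall T, 0 <= q T) ->
  \sum_T q T = 1 -> unit_cube (fun i => \sum_T q T * Defs.indic R T i).
Proof.
move=> q0 q1 i; have ind01 T := indic_cube T i.
rewrite sumr_ge0 => [|T _]; last by rewrite mulr_ge0 // (andP (ind01 T)).1.
rewrite -q1; apply: ler_sum => T _.
by rewrite -[leRHS]mulr1 ler_wpM2l // (andP (ind01 T)).2.
Qed.

End LovaszExtension.

Lemma psumr_gt0 (R : numDomainType) (I : finType) (F : I -> R) (i0 : I) :
  (forall i, 0 <= F i) -> 0 < F i0 -> 0 < \sum_i F i.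
Proof.
move=> F0 Fi0; rewrite lt_def sumr_ge0 // andbT; apply/eqP.
by move/psumr_eq0P => /(_ (fun i _ => F0 i) i0 isT) Fi0E; rewrite Fi0E ltxx in Fi0.
Qed.

Lemma max0_sqr_le (R : realDomainType) (u v : R) :
  u <= v -> Num.max 0 u ^+ 2 <= v ^+ 2.
Proof.
rewrite maxEle; case: ifP => [u0 uv|_ _]; last by rewrite expr0n sqr_ge0.
by rewrite ler_sqr ?nnegrE ?(le_trans u0).
Qed.

Lemma le0_of_le_scale (R : realFieldType) (Q D : R) :
  (forall t, 0 < t <= 1 -> Q <= t * D) -> Q <= 0.
Proof.
move=> QD; rewrite leNgt; apply/negP => Q0.
have D1 : Q <= D by rewrite -[D]mul1r QD // ltr01 lexx.
have QD0 : 0 < Q + D by lra.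
have := QD (Q / (Q + D)); rewrite divr_gt0 // ler_pdivrMr // mul1r.
rewrite mulrAC ler_pdivlMr //; nra.
Qed.

Lemma continuous_sum (R : realType) (T : topologicalType) (I : finType)
  (F : I -> T -> R) :
  (forall i, continuous (F i)) -> continuous (fun y => \sum_i F i y).
Proof.
move=> Fc; apply: (@continuous_big R _ +%R 0 xpredT) => //.
exact: add_continuous.
Qed.

Local Open Scope classical_set_scope.
Local Open Scope ring_scope.

Section Penalty.
Variables (R : realType) (m : nat) (I : finType).
Variables (Y : set 'rV[R]_m) (F : I -> 'rV[R]_m -> R) (c : R).

Definition shortfall y i := Num.max 0 (c - F i y).

Definition penalty y := \sum_i shortfall y i ^+ 2.

Lemma penalty_continuous : (forall i, continuous (F i)) -> continuous penalty.
Proof.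
move=> Fc; apply: continuous_sum => i y.
have sc : {for y, continuous (shortfall^~ i)}.
  apply: (@continuous_max _ _ (cst 0) (fun z => c - F i z)); first exact: cst_continuous.
  exact: (continuousB (@cst_continuous _ _ c y) (Fc i y)).
have := continuousM sc sc.
by congr ({for y, continuous _}); apply: funext => z; rewrite /= expr2.
Qed.

(* By concavity the shortfalls at [t *: y + (1 - t) *: ys] are at most
   [P i - t * d i], so minimality of [ys] forces [2 Q <= t D] for every
   [t] in (0, 1], with [Q = sum_i P i * d i], hence [Q <= 0]. *)
Lemma penalty_argmin_le ys : convex_subset Y -> (forall i, concave_fun (F i)) ->
  Y ys -> (forall y, Y y -> penalty ys <= penalty y) ->
  forall y, Y y -> \sum_i shortfall ys i * F i y <= \sum_i shortfall ys i * F i ys.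
Proof.
move=> Yconvex Fconcave Yys ysmin y Yy.
pose d i := F i y - F i ys; pose P := shortfall ys.
have step t : 0 < t <= 1 -> 2 * (\sum_i P i * d i) <= t * \sum_i d i ^+ 2.
  move=> /andP[t0 t1]; have t01 : 0 <= t <= 1 by rewrite ltW.
  have pen_le : penalty ys <= \sum_i (P i - t * d i) ^+ 2.
    apply: le_trans (ysmin _ (Yconvex _ _ Yy Yys t t01)) _.
    apply: ler_sum => i _; apply: max0_sqr_le.
    have : c - F i ys <= P i by rewrite /P /shortfall le_max lexx orbT.
    have := Fconcave i y ys t t01; rewrite /d; nra.
  have expand : \sum_i (P i - t * d i) ^+ 2 =
      penalty ys - 2 * t * \sum_i P i * d i + t ^+ 2 * \sum_i d i ^+ 2.
    rewrite /penalty mulr_sumr [X in _ + X]mulr_sumr -sumrB -big_split /=.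
    by apply: eq_bigr => i _; rewrite /P; ring.
  have : t * (2 * \sum_i P i * d i) <= t * (t * \sum_i d i ^+ 2).
    by move: pen_le; rewrite expand; nra.
  by rewrite ler_pM2l.
have : 2 * \sum_i P i * d i <= 0 by apply: le0_of_le_scale; exact: step.
have -> : \sum_i P i * d i = \sum_i P i * F i y - \sum_i P i * F i ys.
  by rewrite -sumrB; apply: eq_bigr => i _; rewrite mulrBr.
lra.
Qed.

End Penalty.

Section BinaryMinimiser.
Variables (R : realType) (n m : nat).
Variables (Y : set 'rV[R]_m) (f : {set 'I_n} -> 'rV[R]_m -> R).
Hypotheses (Y0 : Y !=set0) (Ycompact : compact Y) (fcont : forall S, continuous (f S)).

Lemma lovasz2_continuous x : continuous (lovasz2 f x).
Proof.
by apply: continuous_sum => k y; apply: (@continuousM _ _ (fun _ => _) (f _) y); [exact: cst_continuous | exact: fcont].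
Qed.

Lemma lovasz2_le_zeta x y : Y y -> lovasz2 f x y <= zeta f Y x.
Proof.
move=> Yy; have [y1 _ y1max] := EVT_max_rV Y0 Ycompact
  (@continuous_subspaceT _ _ Y _ (@lovasz2_continuous x)).
apply: ub_le_sup; last by exists y.
by exists (lovasz2 f x y1) => _ [z Yz <-]; apply: y1max; rewrite inE.
Qed.

Lemma zeta_le x b : (forall y, Y y -> lovasz2 f x y <= b) -> zeta f Y x <= b.
Proof.
move=> xb; apply: ge_sup => [|_ [y Yy <-]]; last exact: xb.
by case: Y0 => y Yy; exists (lovasz2 f x y), y.
Qed.

Lemma zeta_indic_ge S y : Y y -> f S y <= zeta f Y (Defs.indic R S).
Proof. by move=> Yy; rewrite -[f S y](lovasz_indic (f^~ y)); apply: lovasz2_le_zeta. Qed.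

Lemma binary_zeta_minimiser :
  ((exists g : {set 'I_n} -> R, submodular g /\
      forall x, unit_cube x -> zeta f Y x = lovasz g x)
   \/ (exists xb, binary_pts xb /\ unit_cube xb /\
         forall x, unit_cube x -> zeta f Y xb <= zeta f Y x)
   \/ (exists xb, binary_pts xb /\
         forall y, Y y -> forall x, unit_cube x ->
           lovasz2 f xb y <= lovasz2 f x y)) ->
  exists S, forall x, unit_cube x -> zeta f Y (Defs.indic R S) <= zeta f Y x.
Proof.
case=> [[g [_ zetaE]] | [[_ [[S ->] [_ Smin]]] | [_ [[S ->] Smin]]]].
- pose S := [arg min_(T < finset.set0) g T]%O; exists S => x xc.
  rewrite (zetaE _ (indic_cube R S)) zetaE // lovasz_indic; apply: lovasz_ge => // T.
  by rewrite /S; case: arg_minP => // S1 _; apply.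
- by exists S.
- exists S => x xc; apply: zeta_le => y Yy.
  exact: le_trans (Smin y Yy x xc) (lovasz2_le_zeta x Yy).
Qed.

Hypotheses (Yconvex : convex_subset Y) (fconcave : forall S, concave_fun (f S)).
Hypothesis fsubmod : forall y, submodular (fun S => f S y).

Lemma zeta_mix_le (q : {set 'I_n} -> R) b : (forall T, 0 <= q T) -> \sum_T q T = 1 ->
  (forall y, Y y -> \sum_T q T * f T y <= b) ->
  zeta f Y (fun i => \sum_T q T * Defs.indic R T i) <= b.
Proof.
move=> q0 q1 qb; apply: zeta_le => y Yy.
exact: le_trans (lovasz_mix_le (fsubmod y) q0 q1) (qb y Yy).
Qed.

Lemma zeta_binary_min_attained S :
  (forall x, unit_cube x -> zeta f Y (Defs.indic R S) <= zeta f Y x) ->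
  exists2 y0, Y y0 & forall T, zeta f Y (Defs.indic R S) <= f T y0.
Proof.
move=> Smin; set c := zeta f Y _.
have [ys Yys ysmin] := EVT_min_rV Y0 Ycompact
  (@continuous_subspaceT _ _ Y _ (penalty_continuous (c := c) fcont)).
rewrite inE in Yys; exists ys => // T0; rewrite leNgt; apply/negP => fT0.
pose P := shortfall f c ys; set sP := \sum_T P T; set sP2 := \sum_T P T ^+ 2.
have P0 T : 0 <= P T by rewrite /P /shortfall le_max lexx.
have PT0 : 0 < P T0 by rewrite /P /shortfall lt_max subr_gt0 fT0 orbT.
have sP0 : 0 < sP by apply: psumr_gt0 PT0.
have sP20 : 0 < sP2 by apply: (psumr_gt0 (i0 := T0)) => [T|]; rewrite ?sqr_ge0 ?exprn_gt0.
have fys : \sum_T P T * f T ys = c * sP - sP2.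
  rewrite mulr_sumr -sumrB; apply: eq_bigr => T _.
  by rewrite /P /shortfall maxEle; case: ifP => _; ring.
pose q T := P T / sP.
have q0 T : 0 <= q T by rewrite divr_ge0 // ltW.
have q1 : \sum_T q T = 1 by rewrite -mulr_suml divff // gt_eqF.
have mix_le : zeta f Y (fun i => \sum_T q T * Defs.indic R T i) <= c - sP2 / sP.
  apply: zeta_mix_le q0 q1 _ => y Yy.
  rewrite (eq_bigr (fun T => P T * f T y / sP)) => [|T _]; last by rewrite mulrAC.
  rewrite -mulr_suml ler_pdivrMr // mulrBl divfK ?gt_eqF // -fys.
  apply: (penalty_argmin_le Yconvex fconcave Yys) => // y1 Yy1.
  by apply: ysmin; rewrite inE.
have := Smin _ (mix_indic_cube q0 q1); rewrite -/c.
have : 0 < sP2 / sP by rewrite divr_gt0.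
lra.
Qed.

End BinaryMinimiser.


Theorem proposition2 (R : realType) (n m : nat)
  (Y : set 'rV[R]_m) (f : {set 'I_n} -> 'rV[R]_m -> R) :
  Y !=set0 -> convex_subset Y -> compact Y ->
  (forall y, submodular (fun S => f S y)) ->
  (forall S, concave_fun (f S)) ->
  (forall S, continuous (f S)) ->
  ((exists g : {set 'I_n} -> R, submodular g /\
      forall x, unit_cube x -> zeta f Y x = lovasz g x)
   \/ (exists xb, binary_pts xb /\ unit_cube xb /\
         forall x, unit_cube x -> zeta f Y xb <= zeta f Y x)
   \/ (exists xb, binary_pts xb /\
         forall y, Y y -> forall x, unit_cube x ->
           lovasz2 f xb y <= lovasz2 f x y)) ->
  (exists xc, unit_cube xc /\ (forall x, unit_cube x -> zeta f Y xc <= zeta f Y x) /\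
   exists xb, binary_pts xb /\ (forall x, binary_pts x -> zeta f Y xb <= zeta f Y x) /\
   zeta f Y xc = zeta f Y xb)
  /\ (exists S y0, saddle_point f Y S y0).
Proof.
move=> Y0 Yconvex Ycompact fsubmod fconcave fcont hyp.
have [S Smin] := binary_zeta_minimiser Y0 Ycompact fcont hyp.
have [y0 Yy0 y0ge] := zeta_binary_min_attained Y0 Ycompact fcont Yconvex fconcave fsubmod Smin.
have Sge := zeta_indic_ge Y0 Ycompact fcont S.
split.
- exists (Defs.indic R S); split; first exact: indic_cube.
  split=> //; exists (Defs.indic R S); split; first by exists S.
  by split=> // _ [T ->]; apply/Smin/indic_cube.
- exists S, y0; split=> //; split=> [y Yy | T].
  + exact: le_trans (Sge y Yy) (y0ge S).
  + exact: le_trans (Sge y0 Yy0) (y0ge T).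
Qed.
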